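(* Let $k\ge 1$ be an integer, $T=6k+1$, and $w=s_1\cdots s_T\in\Omega_T$. For any distinct $i,j,t\in\{1,2,3\}$, $2x_{ij}(w)+x_{it}(w)+x_{tj}(w)\ge x_{ji}(w)+2k-1$. If equality holds, then $s_T=i$.
   Context: $\Omega_T$ is the set of words $s_1\cdots s_T$ over $\{1,2,3\}$ with $s_l\ne s_{l+1}$ for all $l$; for $i\ne j$, $x_{ij}(w)$ is the number of $l\in\{1,\dots,T-1\}$ with $s_ls_{l+1}=ij$. *)

From mathcomp Require Import all_boot all_order.
Set Implicit Arguments. Unset Strict Implicit. Unset Printing Implicit Defensive.

(* Letters {1,2,3} are represented by 'I_3 = {0,1,2} (letter a+1 <-> a). *)
(* A word s_1 ... s_T is a T.-tuple; s_{l+1} is tnth/nth at index l (0-based). *)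

Definition letter (T : nat) (w : T.-tuple 'I_3) (l : nat) : 'I_3 :=
  nth ord0 w l.

Definition inOmega (T : nat) (w : T.-tuple 'I_3) : bool :=
  [forall l : 'I_T, (l.+1 < T) ==> (letter w l != letter w l.+1)].

(* x_ij(w) = #{ l in {1..T-1} : s_l s_{l+1} = ij } ; 0-based l in [0, T-1). *)
Definition xcount (T : nat) (w : T.-tuple 'I_3) (i j : 'I_3) : nat :=
  count (fun l => (letter w l == i) && (letter w l.+1 == j)) (iota 0 T.-1).

(* Read a word as a walk on the triangle with vertices 1, 2, 3. Each vertex
   is left as often as it is entered, up to the endpoints of the walk, and the
   T - 1 = 6k steps are shared by the six oriented edges. Eliminating x_ti and
   x_jt with the balance laws at i and j and using nonnegativity of the counts
   gives 3 (2 x_ij + x_it + x_tj - x_ji) >= 6k - 4 + x_ij, hence the bound by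
   integrality; the slack 6k - 3 is only reached if the walk ends at i. *)

From mathcomp Require Import all_boot all_order.
From mathcomp Require Import zify.

Set Implicit Arguments.
Unset Strict Implicit.
Unset Printing Implicit Defensive.

Lemma count_split (I : eqType) (a b c : pred I) (s : seq I) :
  {in s, forall l, c l = a l + b l :> nat} -> count c s = count a s + count b s.
Proof.
elim: s => //= l s IHs Habc.
rewrite Habc ?mem_head // IHs; first by lia.
by move=> l' sl'; apply: Habc; rewrite in_cons sl' orbT.
Qed.

Section Walk.

Variables (T : eqType) (f : nat -> T) (n : nat).

Definition visits (x : T) : nat := count (fun l => f l == x) (iota 0 n).

Definition arrivals (x : T) : nat := count (fun l => f l.+1 == x) (iota 0 n).

Definition transitions (x y : T) : nat :=
  count (fun l => (f l == x) && (f l.+1 == y)) (iota 0 n).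

Lemma visits_balance (x : T) : visits x + (f n == x) = (f 0 == x) + arrivals x.
Proof.
have := count_cat (fun l => f l == x) (iota 0 n) [:: n].
rewrite /= addn0 -[[:: n]]/(iota (0 + n) 1) -iotaD addn1 /= -add1n iotaDl.
by rewrite count_map => <-.
Qed.

End Walk.

Lemma ord3_partition (u x y z : 'I_3) : x != y -> x != z -> y != z ->
  (u == x) + (u == y) + (u == z) = 1.
Proof. by move: u x y z; do 4!case=> [[|[|[|?]]] ?]. Qed.

Lemma ord3_step_split (u v x y z : 'I_3) :
  u != v -> x != y -> x != z -> y != z ->
  (u == x) = ((u == x) && (v == y)) + ((u == x) && (v == z)) :> nat.
Proof.
move=> uv xy xz yz; have := ord3_partition v xy xz yz.
by case: (u =P x) uv => [<- | _] //=; rewrite eq_sym => /negPf -> /=; rewrite add0n.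
Qed.

Lemma visits_total (f : nat -> 'I_3) (n : nat) (x y z : 'I_3) :
  x != y -> x != z -> y != z -> visits f n x + visits f n y + visits f n z = n.
Proof.
move=> xy xz yz.
rewrite -(@count_split nat _ _ (fun l => (f l == x) || (f l == y))); last first.
  by move=> l _; case: (f l =P x) => [-> | _]; rewrite ?(negPf xy).
rewrite -(@count_split nat _ _ predT) ?count_predT ?size_iota //.
move=> l _; have := ord3_partition (f l) xy xz yz.
by case: (f l == x); case: (f l == y); case: (f l == z).
Qed.

Section NoRepeatedLetter.

Variables (f : nat -> 'I_3) (n : nat).
Hypothesis f_step : forall l, l < n -> f l != f l.+1.

Lemma visits_split (x y z : 'I_3) : x != y -> x != z -> y != z ->
  visits f n x = transitions f n x y + transitions f n x z.
Proof.
move=> xy xz yz; apply: count_split => l; rewrite mem_iota add0n => /f_step fl.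
exact: ord3_step_split.
Qed.

Lemma arrivals_split (x y z : 'I_3) : x != y -> x != z -> y != z ->
  arrivals f n x = transitions f n y x + transitions f n z x.
Proof.
move=> xy xz yz; apply: count_split => l; rewrite mem_iota add0n => /f_step fl.
by rewrite !(andbC (f l == _)); apply: ord3_step_split; rewrite // eq_sym.
Qed.

Lemma transitions_balance (x y z : 'I_3) : x != y -> x != z -> y != z ->
  transitions f n x y + transitions f n x z + (f n == x) =
  (f 0 == x) + transitions f n y x + transitions f n z x.
Proof.
move=> xy xz yz; have := visits_balance f n x.
by rewrite (visits_split xy xz yz) (arrivals_split xy xz yz) addnA.
Qed.

End NoRepeatedLetter.

Lemma walk_count_bound (k aij aji ait ati ajt atj : nat) (si sj ei ej : bool) :
  0 < k ->
  aij + ait + ei = si + aji + ati ->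
  aji + ajt + ej = sj + aij + atj ->
  aij + ait + aji + ajt + ati + atj = 6 * k ->
  aji + 2 * k - 1 <= 2 * aij + ait + atj /\
  (2 * aij + ait + atj = aji + 2 * k - 1 -> ei).
Proof. by case: ei; split; lia. Qed.

Lemma inOmega_step (T : nat) (w : T.-tuple 'I_3) (l : nat) :
  inOmega w -> l.+1 < T -> letter w l != letter w l.+1.
Proof.
move=> /forallP wO lT; have lT' : l < T by apply: ltnW.
by have /implyP := wO (Ordinal lT'); apply.
Qed.

Theorem lemma7 (k : nat) (w : (6 * k + 1).-tuple 'I_3) (i j t : 'I_3) :
  1 <= k -> inOmega w -> i != j -> i != t -> j != t ->
  xcount w j i + 2 * k - 1 <= 2 * xcount w i j + xcount w i t + xcount w t j /\
  (2 * xcount w i j + xcount w i t + xcount w t j = xcount w j i + 2 * k - 1 ->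
   letter w (6 * k) = i).
Proof.
move=> k_gt0 wO ij it jt.
have xcountE x y : xcount w x y = transitions (letter w) (6 * k) x y.
  by rewrite /xcount /transitions; congr count; rewrite addn1.
have step l : l < 6 * k -> letter w l != letter w l.+1.
  by move=> lk; apply: inOmega_step; rewrite // addn1 ltnS.
rewrite !xcountE; move: (letter w) step => f step.
have [ji ti tj] : [/\ j != i, t != i & t != j] by rewrite !(eq_sym t) eq_sym.
have total : transitions f (6 * k) i j + transitions f (6 * k) i t +
    transitions f (6 * k) j i + transitions f (6 * k) j t +
    transitions f (6 * k) t i + transitions f (6 * k) t j = 6 * k.
  have := visits_total f (6 * k) ij it jt.
  rewrite (visits_split step ij it jt) (visits_split step ji jt it).
  by rewrite (visits_split step ti tj ij); lia.
have [bound end_i] := walk_count_bound k_gt0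
  (transitions_balance step ij it jt) (transitions_balance step ji jt it) total.
by split=> // /end_i /eqP.
Qed.
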